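(* Let $\mathcal{H}$ be a finite-dimensional complex Hilbert space and $A,B$ linear operators on $\mathcal{H}$ with $\|A\|\le1$, $\|B\|\le1$ (operator norms), such that $1$ is an eigenvalue of $A$ and of $B$ and there is a nonzero $\rho_1\in\mathcal{H}$ with $A^*\rho_1=\rho_1$ and $B^*\rho_1=\rho_1$. Let $0<p,q<1$, $p+q=1$, and $\mathcal{L}=qA+pB$. If $\lambda=1$ is the only eigenvalue of $B$ with $|\lambda|=1$, then $\lambda=1$ is also the only eigenvalue of $\mathcal{L}$ with $|\lambda|=1$. *)

(* H = C^n with C = R[i], R : realType (complex numbers). *)
From mathcomp Require Import all_boot all_algebra.
From mathcomp Require Import complex.
From mathcomp Require Import reals.
Set Implicit Arguments. Unset Strict Implicit. Unset Printing Implicit Defensive.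
Import GRing.Theory Num.Theory.
Local Open Scope ring_scope.

Definition hnorm2 (R : realType) (n : nat) (v : 'cV[R[i]]_n) : R[i] :=
  \sum_(k < n) `|v k 0| ^+ 2.

Definition opnorm_le1 (R : realType) (n : nat) (A : 'M[R[i]]_n) : Prop :=
  forall v : 'cV[R[i]]_n, hnorm2 (A *m v) <= hnorm2 v.

Definition adjmx (R : realType) (n : nat) (A : 'M[R[i]]_n) : 'M[R[i]]_n :=
  map_mx (@conjc R) A^T.

Definition is_eigenvalue (R : realType) (n : nat) (A : 'M[R[i]]_n) (lam : R[i]) : Prop :=
  exists2 v : 'cV[R[i]]_n, v != 0 & A *m v = lam *: v.

(* A vector v with L v = lam v, |lam| = 1, L = qA + pB has the norm of v on both sides of
   the parallelogram-type identity
     |q a + p b|^2 = q |a|^2 + p |b|^2 - q p |a - b|^2,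
   while |A v|, |B v| <= |v|.  This forces A v = B v, hence B v = L v = lam v, so lam is a
   peripheral eigenvalue of B and equals 1. *)
From mathcomp Require Import all_boot all_order all_algebra.
From mathcomp Require Import complex.
From mathcomp Require Import reals.
From mathcomp Require Import ring.
Set Implicit Arguments. Unset Strict Implicit. Unset Printing Implicit Defensive.
Import Order.TTheory GRing.Theory Num.Theory.
Local Open Scope ring_scope.

Lemma normC_convex_sqr (C : numClosedFieldType) (s t x y : C) :
  s \is Num.real -> t \is Num.real -> s + t = 1 ->
  `|s * x + t * y| ^+ 2 = s * `|x| ^+ 2 + t * `|y| ^+ 2 - s * t * `|x - y| ^+ 2.
Proof.
move=> sR tR st1; rewrite !normCK !(rmorphD, rmorphB, rmorphM) /= (conj_Creal sR) (conj_Creal tR).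
have -> : t = 1 - s by rewrite -st1 addrAC subrr add0r.
ring.
Qed.

Section SquaredNorm.
Variables (R : realType) (n : nat).
Implicit Types (u v w : 'cV[R[i]]_n) (c : R[i]).

Lemma hnorm2_ge0 v : 0 <= hnorm2 v.
Proof. by apply: sumr_ge0 => k _; rewrite exprn_ge0. Qed.

Lemma hnorm2_eq0 v : hnorm2 v = 0 -> v = 0.
Proof.
move=> /eqP; rewrite /hnorm2 psumr_eq0 => [/allP v0|k _]; last by rewrite exprn_ge0.
apply/matrixP => k j; rewrite (ord1 j) mxE.
by have := v0 k (mem_index_enum _); rewrite /= sqrf_eq0 normr_eq0 => /eqP.
Qed.

Lemma hnorm2Z c v : hnorm2 (c *: v) = `|c| ^+ 2 * hnorm2 v.
Proof. by rewrite /hnorm2 mulr_sumr; apply: eq_bigr => k _; rewrite mxE normrM exprMn. Qed.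

Lemma hnorm2_convex (s t : R[i]) u w :
  s \is Num.real -> t \is Num.real -> s + t = 1 ->
  hnorm2 (s *: u + t *: w) = s * hnorm2 u + t * hnorm2 w - s * t * hnorm2 (u - w).
Proof.
move=> sR tR st1; rewrite /hnorm2 !mulr_sumr -big_split -sumrB /=.
by apply: eq_bigr => k _; rewrite !mxE normC_convex_sqr.
Qed.

End SquaredNorm.

Lemma realC_convex_weights (R : realType) (s t : R) :
  s + t = 1 -> s%:C%C + t%:C%C = 1 :> R[i].
Proof. by move=> st1; rewrite -rmorphD /= st1. Qed.

Lemma realC_real (R : realType) (s : R) : s%:C%C \is Num.real.
Proof. by apply/complex_realP; exists s. Qed.

(* Strict convexity of the Hilbert norm. *)
Lemma contraction_convex_eigen_eq (R : realType) (n : nat) (A B : 'M[R[i]]_n)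
    (s t : R) (v : 'cV[R[i]]_n) (lam : R[i]) :
  opnorm_le1 A -> opnorm_le1 B -> 0 < s -> 0 < t -> s + t = 1 -> `|lam| = 1 ->
  (s%:C%C *: A + t%:C%C *: B) *m v = lam *: v -> A *m v = B *m v.
Proof.
move=> hA hB s0 t0 st1 lam1 hv.
have st0 : 0 < s%:C%C * t%:C%C :> R[i] by rewrite mulr_gt0 ?ltcR.
have v_eq : hnorm2 v = s%:C%C * hnorm2 (A *m v) + t%:C%C * hnorm2 (B *m v)
                       - s%:C%C * t%:C%C * hnorm2 (A *m v - B *m v).
  rewrite -hnorm2_convex ?realC_real ?realC_convex_weights //.
  by rewrite !scalemxAl -mulmxDl hv hnorm2Z lam1 expr1n mul1r.
have mix_le : s%:C%C * hnorm2 (A *m v) + t%:C%C * hnorm2 (B *m v) <= hnorm2 v.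
  rewrite -[hnorm2 v]mul1r -(realC_convex_weights st1) mulrDl.
  by apply: lerD; rewrite ler_pM2l ?ltcR.
have diff_le0 : s%:C%C * t%:C%C * hnorm2 (A *m v - B *m v) <= 0.
  by move: mix_le; rewrite {1}v_eq -subr_ge0 addrAC subrr add0r oppr_ge0.
apply/eqP; rewrite -subr_eq0; apply/eqP/hnorm2_eq0/eqP.
by rewrite eq_le hnorm2_ge0 andbT -(pmulr_rle0 _ st0) diff_le0.
Qed.

Theorem mainTheorem4 (R : realType) (n : nat) (A B : 'M[R[i]]_n) (p q : R)
  (hA : opnorm_le1 A) (hB : opnorm_le1 B)
  (hA1 : is_eigenvalue A 1) (hB1 : is_eigenvalue B 1)
  (rho1 : 'cV[R[i]]_n) (hrho : rho1 != 0)
  (hArho : adjmx A *m rho1 = rho1) (hBrho : adjmx B *m rho1 = rho1)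
  (hp0 : 0 < p) (hp1 : p < 1) (hq0 : 0 < q) (hq1 : q < 1) (hpq : p + q = 1)
  (hBper : forall lam : R[i], is_eigenvalue B lam -> `|lam| = 1 -> lam = 1) :
  forall lam : R[i],
    is_eigenvalue ((q%:C)%C *: A + (p%:C)%C *: B) lam -> `|lam| = 1 -> lam = 1.
Proof.
move=> lam [v v0 hv] lam1.
have qp1 : q + p = 1 by rewrite addrC.
have ABv := contraction_convex_eigen_eq hA hB hq0 hp0 qp1 lam1 hv.
apply: hBper lam1; exists v => //.
by rewrite -hv mulmxDl -!scalemxAl ABv -scalerDl realC_convex_weights // scale1r.
Qed.
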